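(* Let $G$ be the undirected graph with vertex set $\{v_1,\dots,v_8\}$ and edge set $\{v_1v_5,\ v_1v_6,\ v_2v_5,\ v_2v_6,\ v_2v_7,\ v_2v_8,\ v_4v_7,\ v_4v_8\}$, and let $V_1=\{v_1,v_2,v_7,v_8\}$, $V_2=\{v_2,v_4,v_5,v_6\}$, $V_3=\{v_1,v_2,v_3,v_4\}$, $V_4=\{v_5,v_6,v_7,v_8\}$. Let $\mu\ge 4$ be even and let $\nu=\frac{\mu}{2}-1$. Consider the population (multiset of $\mu$ vertex covers of $G$) consisting of one copy of $V_1$, one copy of $V_2$, $\nu$ copies of $V_3$ and $\nu$ copies of $V_4$. Then this population has sub-optimal diversity (total Hamming distance) among populations of $\mu$ vertex covers of $G$ of size at most $4$, and replacing any one individual of it with any different vertex cover of $G$ of size at most $4$ strictly reduces the diversity.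
   Context: A vertex cover of $G=(V,E)$ is a set $C\subseteq V$ such that every edge has at least one endpoint in $C$. Subsets of $V$ are identified with bit strings of length $|V|$ (bit $i$ indicates whether $v_i$ is included). For a population $P=(x_1,\dots,x_\mu)$ (a multiset) of bit strings, the diversity is the total Hamming distance $D(P)=\sum_{1\le a<b\le \mu} H(x_a,x_b)$, where $H$ is the Hamming distance. *)

From mathcomp Require Import all_boot.
Set Implicit Arguments. Unset Strict Implicit. Unset Printing Implicit Defensive.

(* Vertices v_1..v_8 are the ordinals 0..7 of 'I_8 (v_k  ~  k-1).
   A subset of V is identified with its bit string; the Hamming distance of
   two bit strings is the size of the symmetric difference of the sets. *)

Definition hamming (n : nat) (A B : {set 'I_n}) : nat :=
  #|(A :\: B) :|: (B :\: A)|.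

(* Population of size mu: an indexed family (multiset) of mu subsets. *)
Definition diversity (n mu : nat) (P : 'I_mu -> {set 'I_n}) : nat :=
  \sum_(a < mu) \sum_(b < mu | a < b) hamming (P a) (P b).

Definition vertex_cover (n : nat) (E : seq ('I_n * 'I_n)) (C : {set 'I_n}) : bool :=
  all (fun e => (e.1 \in C) || (e.2 \in C)) E.

Definition v (k : nat) : 'I_8 := inord k.-1.

Definition G_edges : seq ('I_8 * 'I_8) :=
  [:: (v 1, v 5); (v 1, v 6); (v 2, v 5); (v 2, v 6);
      (v 2, v 7); (v 2, v 8); (v 4, v 7); (v 4, v 8)].

Definition V1 : {set 'I_8} := [set v 1; v 2; v 7; v 8].
Definition V2 : {set 'I_8} := [set v 2; v 4; v 5; v 6].
Definition V3 : {set 'I_8} := [set v 1; v 2; v 3; v 4].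
Definition V4 : {set 'I_8} := [set v 5; v 6; v 7; v 8].

Definition feasible (C : {set 'I_8}) : bool :=
  vertex_cover G_edges C && (#|C| <= 4).

(* the population: index 0 -> V1, index 1 -> V2,
   indices 2 .. nu+1 -> V3 (nu copies), indices nu+2 .. mu-1 -> V4,
   with nu = mu/2 - 1 (so mu - 2 - nu = nu copies of V4 when mu is even) *)
Definition pop (mu : nat) : 'I_mu -> {set 'I_8} := fun a =>
  let nu := mu./2 - 1 in
  if val a == 0 then V1
  else if val a == 1 then V2
  else if val a < nu + 2 then V3
  else V4.

Definition replace (mu : nat) (P : 'I_mu -> {set 'I_8}) (i : 'I_mu)
  (C : {set 'I_8}) : 'I_mu -> {set 'I_8} :=
  fun j => if j == i then C else P j.

(* Replacing the member P_i of a population by C changes its diversity by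
   sum_{b <> i} H(C, P_b) - sum_{b <> i} H(P_i, P_b).  Since V4 is the complement
   of V3, every set Y has H(Y, V3) + H(Y, V4) = 8, so against our population
   sum_b H(Y, P_b) = H(Y, V1) + H(Y, V2) + 8 nu.  Hence the diversity depends on
   the first two members only through their distance, which is 6 for (V1, V2) but
   8 for (V3, V4); and replacing S by C loses diversity exactly when
   H(C, V1) + H(C, V2) < H(S, V1) + H(S, V2) + H(C, S), which is checked over all
   vertex covers C of size at most 4. *)

From mathcomp Require Import all_boot zify.
Set Implicit Arguments. Unset Strict Implicit. Unset Printing Implicit Defensive.

Section Hamming.
Variable n : nat.
Implicit Types A B : {set 'I_n}.

Lemma hammingC A B : hamming A B = hamming B A.
Proof. by rewrite /hamming setUC. Qed.

Lemma hammingxx A : hamming A A = 0.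
Proof. by rewrite /hamming setDv setU0 cards0. Qed.

Lemma hamming_eq0 A B : (hamming A B == 0) = (A == B).
Proof. by rewrite /hamming cards_eq0 setU_eq0 !setD_eq0 eqEsubset. Qed.

Lemma hammingE A B : hamming A B = \sum_(k < n) ((k \in A) != (k \in B)).
Proof.
rewrite /hamming -sum1_card big_mkcond; apply: eq_bigr => k _.
by rewrite !inE; case: (k \in A); case: (k \in B).
Qed.

Lemma hamming_setC A B : hamming A B + hamming A (~: B) = n.
Proof.
rewrite !hammingE -big_split -[RHS]card_ord -sum1_card.
by apply: eq_bigr => k _; rewrite inE; case: (k \in A); case: (k \in B).
Qed.

End Hamming.

Section Diversity.
Variables n mu : nat.
Implicit Types P Q : 'I_mu -> {set 'I_n}.

Lemma diversity_double P :
  (diversity P).*2 = \sum_(a < mu) \sum_(b < mu) hamming (P a) (P b).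
Proof.
have split_pair a : \sum_(b < mu) hamming (P a) (P b) =
    \sum_(b < mu) (if a < b then hamming (P a) (P b) else 0)
  + \sum_(b < mu) (if b < a then hamming (P b) (P a) else 0).
  rewrite -big_split; apply: eq_bigr => b _ /=.
  case: ltngtP => [_|_|/val_inj->]; rewrite ?addn0 ?add0n ?hammingxx //.
  exact: hammingC.
rewrite (eq_bigr _ (fun a _ => split_pair a)) big_split /=.
rewrite [X in _ + X]exchange_big -addnn.
by rewrite /diversity; congr (_ + _); apply: eq_bigr => a _; rewrite big_mkcond.
Qed.

Lemma sum_hamming_bigD1 P i :
  \sum_(a < mu) \sum_(b < mu) hamming (P a) (P b) =
  (\sum_(b < mu | b != i) hamming (P i) (P b)).*2
  + \sum_(a < mu | a != i) \sum_(b < mu | b != i) hamming (P a) (P b).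
Proof.
rewrite (bigD1 i) //= (bigD1 i) //= hammingxx add0n -addnn -addnA; congr (_ + _).
rewrite -big_split /=; apply: eq_bigr => a _.
by rewrite (bigD1 i) //= hammingC.
Qed.

(* Only the pairs through i change, and each is counted twice in the full double sum. *)
Lemma diversity_replace P Q i : (forall j, j != i -> Q j = P j) ->
  diversity Q + \sum_(b < mu) hamming (P i) (P b) + hamming (Q i) (P i) =
  diversity P + \sum_(b < mu) hamming (Q i) (P b).
Proof.
move=> QP; set C := Q i.
have sumD1 (F : 'I_mu -> nat) : \sum_(b < mu) F b = F i + \sum_(b < mu | b != i) F b.
  exact: bigD1.
have eqQP : \sum_(b < mu | b != i) hamming C (Q b) = \sum_(b < mu | b != i) hamming C (P b).
  by apply: eq_bigr => b /QP ->.
have eq_rest : \sum_(a < mu | a != i) \sum_(b < mu | b != i) hamming (Q a) (Q b) =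
               \sum_(a < mu | a != i) \sum_(b < mu | b != i) hamming (P a) (P b).
  by apply: eq_bigr => a /QP ->; apply: eq_bigr => b /QP ->.
have := diversity_double Q; have := diversity_double P.
rewrite !(sum_hamming_bigD1 _ i) eqQP eq_rest !(sumD1 (fun b => hamming _ (P b))) hammingxx.
rewrite -!muln2; lia.
Qed.

End Diversity.

Lemma cardE_sum n (A : {set 'I_n}) : #|A| = \sum_(k < n) (k \in A).
Proof. by rewrite -sum1_card big_mkcond; apply: eq_bigr => k _; case: (k \in A). Qed.

Lemma val_v k : 0 < k <= 8 -> val (v k) = k.-1.
Proof. by case: k => // k /= k_le8; rewrite /v inordK. Qed.

Lemma eq_v i j : 0 < i <= 8 -> 0 < j <= 8 -> (v i == v j) = (i == j).
Proof. by move=> Hi Hj; rewrite -val_eqE !val_v //; case: i Hi => //; case: j Hj. Qed.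

Lemma big_ord8 (F : 'I_8 -> nat) :
  \sum_(k < 8) F k = F (v 1) + F (v 2) + F (v 3) + F (v 4) + F (v 5) + F (v 6) + F (v 7) + F (v 8).
Proof.
rewrite !big_ord_recl big_ord0 addn0 !addnA.
by repeat congr (_ + _); congr F; apply: val_inj; rewrite val_v.
Qed.

Lemma feasible_V1234 : [/\ feasible V1, feasible V2, feasible V3 & feasible V4].
Proof.
by split; rewrite /feasible /vertex_cover /G_edges /= cardE_sum big_ord8 !inE !eq_v.
Qed.

Lemma hamming_V1V2 : hamming V1 V2 = 6.
Proof. by rewrite hammingE big_ord8 !inE !eq_v. Qed.

Lemma V4_setC : V4 = ~: V3.
Proof. by apply/eqP; rewrite -hamming_eq0 hammingE big_ord8 !inE !eq_v. Qed.

Lemma hamming_V3V4 : hamming V3 V4 = 8.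
Proof. by rewrite V4_setC; have := hamming_setC V3 V3; rewrite hammingxx. Qed.

Lemma replacement_loss S C : S \in [:: V1; V2; V3; V4] -> feasible C -> C != S ->
  hamming C V1 + hamming C V2 < hamming S V1 + hamming S V2 + hamming C S.
Proof.
move=> S_in; rewrite -hamming_eq0 -lt0n.
rewrite /feasible /vertex_cover /G_edges /= cardE_sum !hammingE !big_ord8.
rewrite !inE in S_in; case/or4P: S_in => /eqP ->; rewrite !inE !eq_v //;
move: (v 1 \in C) (v 2 \in C) (v 3 \in C) (v 4 \in C)
      (v 5 \in C) (v 6 \in C) (v 7 \in C) (v 8 \in C);
by do 8 case.
Qed.

Section Population.
Variable mu : nat.
Hypotheses (mu_gt1 : 1 < mu) (mu_even : ~~ odd mu).

Definition pop_with (A B : {set 'I_8}) : 'I_mu -> {set 'I_8} := fun a =>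
  let nu := mu./2 - 1 in
  if val a == 0 then A
  else if val a == 1 then B
  else if val a < nu + 2 then V3
  else V4.

Lemma pop_with_in A B i : pop_with A B i \in [:: A; B; V3; V4].
Proof. by rewrite /pop_with !inE; repeat case: ifP => _; rewrite eqxx ?orbT. Qed.

Lemma feasible_pop_with A B i : feasible A -> feasible B -> feasible (pop_with A B i).
Proof.
have [_ _ F3 F4] := feasible_V1234.
by rewrite /pop_with; repeat case: ifP.
Qed.

Lemma sum_pop_with (F : {set 'I_8} -> nat) A B :
  \sum_(b < mu) F (pop_with A B b) = F A + F B + (mu./2 - 1) * (F V3 + F V4).
Proof.
set nu := mu./2 - 1.
have mu_eq : mu = nu + 2 + nu.
  by move: (odd_double_half mu); rewrite (negbTE mu_even) -muln2 /nu; lia.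
pose g k := F (if k == 0 then A else if k == 1 then B else if k < nu + 2 then V3 else V4).
transitivity (\sum_(b < mu) g b); first by [].
rewrite -(big_mkord xpredT g) (big_cat_nat (n := nu + 2)) //=; last by lia.
rewrite big_ltn; last by lia.
rewrite big_ltn; last by lia.
rewrite (eq_big_nat _ _ (F2 := fun => F V3)); last first.
  move=> k /andP [k_ge2 k_lt]; rewrite /g k_lt.
  by have [-> ->] : ((k == 0) = false) * ((k == 1) = false) by split; lia.
rewrite [X in _ + X](eq_big_nat _ _ (F2 := fun => F V4)); last first.
  move=> k /andP [k_ge k_lt]; rewrite /g.
  have [[-> ->] ->] : ((k == 0) = false) * ((k == 1) = false) * ((k < nu + 2) = false).
    by do 2?split; lia.
  by [].
rewrite !sum_nat_const_nat /g /= mulnDr.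
have -> : mu - (nu + 2) = nu by lia.
have -> : nu + 2 - 2 = nu by lia.
lia.
Qed.

Lemma sum_hamming_pop_with Y A B :
  \sum_(b < mu) hamming Y (pop_with A B b) = hamming Y A + hamming Y B + (mu./2 - 1) * 8.
Proof. by rewrite (sum_pop_with (hamming Y)) V4_setC hamming_setC. Qed.

Lemma diversity_pop_with_l A A' B :
  diversity (pop_with A' B) + hamming A B = diversity (pop_with A B) + hamming A' B.
Proof.
pose i0 : 'I_mu := Ordinal (ltnW mu_gt1).
have agree j : j != i0 -> pop_with A' B j = pop_with A B j.
  by rewrite -val_eqE /pop_with /= => /negbTE ->.
have := diversity_replace agree.
have -> : pop_with A B i0 = A by [].
have -> : pop_with A' B i0 = A' by [].
rewrite !sum_hamming_pop_with hammingxx; lia.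
Qed.

Lemma diversity_pop_with_r A B B' :
  diversity (pop_with A B') + hamming A B = diversity (pop_with A B) + hamming A B'.
Proof.
pose i1 : 'I_mu := Ordinal mu_gt1.
have agree j : j != i1 -> pop_with A B' j = pop_with A B j.
  by rewrite -val_eqE /pop_with /= => /negbTE ->.
have := diversity_replace agree.
have -> : pop_with A B i1 = B by [].
have -> : pop_with A B' i1 = B' by [].
rewrite !sum_hamming_pop_with hammingxx (hammingC B A) (hammingC B' A); lia.
Qed.

Lemma diversity_pop_with A B A' B' :
  diversity (pop_with A B) + hamming A' B' = diversity (pop_with A' B') + hamming A B.
Proof.
have := diversity_pop_with_l A A' B; have := diversity_pop_with_r A' B B'.
lia.
Qed.

End Population.

Theorem lemma4 (mu : nat) (Hmu : 4 <= mu) (Heven : ~~ odd mu) :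
  (forall i : 'I_mu, feasible (pop i)) /\
  (exists Q : 'I_mu -> {set 'I_8},
      (forall i, feasible (Q i)) /\ diversity (pop (mu:=mu)) < diversity Q) /\
  (forall (i : 'I_mu) (C : {set 'I_8}),
      feasible C -> C != pop i ->
      diversity (replace (pop (mu:=mu)) i C) < diversity (pop (mu:=mu))).
Proof.
have mu_gt1 : 1 < mu by lia.
have -> : pop (mu:=mu) = pop_with (mu:=mu) V1 V2 by [].
have [F1 F2 F3 F4] := feasible_V1234.
split; [|split].
- by move=> i; apply: feasible_pop_with.
- exists (pop_with (mu:=mu) V3 V4); split; first by move=> i; apply: feasible_pop_with.
  have := diversity_pop_with mu_gt1 Heven V1 V2 V3 V4.
  rewrite hamming_V1V2 hamming_V3V4; lia.
- move=> i C C_feas C_new.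
  have := replacement_loss (pop_with_in V1 V2 i) C_feas C_new.
  have agree j : j != i -> replace (pop_with (mu:=mu) V1 V2) i C j = pop_with (mu:=mu) V1 V2 j.
    by rewrite /replace => /negbTE ->.
  have := diversity_replace agree.
  rewrite /replace eqxx !sum_hamming_pop_with; lia.
Qed.
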